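(* Fix a target trajectory $\bm{p}_O:[0,\infty)\to\mathbb{R}^3$ (continuously differentiable) and an end-effector trajectory $\bm{p}_E:[0,\infty)\to\mathbb{R}^3$ obeying $$\dot{\bm{p}}_E(t)=\dot{\bm{p}}_{E,d}(t)+\bm{\Delta}(t),$$ where $\bm{\Delta}$ is an unknown term satisfying $\|\bm{\Delta}(t)\|\le\delta_E$ for all $t\ge0$, for some constant $\delta_E>0$. Let $\bm{e}_E=\bm{p}_E-\bm{p}_O=[e_{E,x},e_{E,y},e_{E,z}]^T$. Let $\bm{\Lambda}$ and $\bm{K}$ be positive diagonal $3\times3$ matrices and set $$\delta_{\bm z}=\frac{(\lambda_{\min}(\bm\Lambda)+\lambda_{\max}(\bm\Lambda))\,\delta_E}{\lambda_{\min}(\bm\Lambda)\,\lambda_{\min}(\bm K)}.$$ For each $\nu\in\{x,y,z\}$ let $\rho_\nu(t)=(\rho_{\nu,0}-\rho_{\nu,\infty})e^{-l_E t}+\rho_{\nu,\infty}$ with constants $l_E>0$, $\rho_{\nu,\infty}>0$ and $\rho_{\nu,0}>|e_{E,\nu}(0)|$, and assume $\bm K$ is chosen so that $\delta_{\bm z}<\min\{\rho_{\nu,\infty},\ \rho_{\nu,0}-|e_{E,\nu}(0)|\}$ for every $\nu$. Let $b_\nu=l_E e_{E,\nu}(0)+\dot e_{E,\nu}(0)$ and choose $c_\nu>0$ with $c_\nu>|b_\nu|/(\rho_{\nu,0}-\delta_{\bm z}-|e_{E,\nu}(0)|)$. Define the preset trajectory $\bm\alpha(t)=[\alpha_x(t),\alpha_y(t),\alpha_z(t)]^T$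 by $$\alpha_\nu(t)=\frac{b_\nu}{c_\nu}(1-e^{-c_\nu t})e^{-l_E t}+e_{E,\nu}(0)e^{-l_E t},$$ and set $\bm z=\bm e_E-\bm\alpha(t)$, $\bm s=\bm z+\bm\Lambda\int_0^t\bm z\,d\tau$. If the desired end-effector velocity is given by the control law $$\dot{\bm p}_{E,d}=\dot{\bm p}_O+\dot{\bm\alpha}-\bm\Lambda\bm z-\bm K\bm s,$$ then the tracking error $\bm e_E$ is bounded and $|e_{E,\nu}(t)|<\rho_\nu(t)$ for all $t\ge0$ and all $\nu\in\{x,y,z\}$.
   Context: This is a kinematic tracking-control setting for the end-effector of an aerial manipulator: $\bm p_E$ is the end-effector position, $\bm p_O$ the target position, $\dot{\bm p}_{E,d}$ the commanded end-effector velocity, and $\bm\Delta$ the (bounded) mismatch between commanded and realized velocity. $\rho_\nu$ is the performance-envelope boundary function for coordinate $\nu$; $\dot e_{E,\nu}(0)$ is the initial rate of the tracking error. $\lambda_{\min},\lambda_{\max}$ denote minimum and maximum eigenvalues. *)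

From Stdlib Require Import Reals.
From Coquelicot Require Export Coquelicot.
Export Reals.
Open Scope R_scope.

Inductive axis : Set := AX | AY | AZ.

Definition vec3 := axis -> R.

Definition norm3 (v : vec3) : R := sqrt (v AX ^ 2 + v AY ^ 2 + v AZ ^ 2).

(* A positive diagonal 3x3 matrix is represented by its diagonal entries;
   its extreme eigenvalues are the extreme diagonal entries. *)
Definition diag_pos (d : vec3) : Prop := forall nu, 0 < d nu.
Definition lam_min (d : vec3) : R := Rmin (Rmin (d AX) (d AY)) (d AZ).
Definition lam_max (d : vec3) : R := Rmax (Rmax (d AX) (d AY)) (d AZ).

Definition deriv_nonneg (f f' : R -> R) : Prop :=
  forall t, 0 <= t ->
    filterlim (fun s => (f s - f t) / (s - t))
      (within (fun s => 0 <= s /\ s <> t) (locally t)) (locally (f' t)).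

Definition cont_nonneg (f : R -> R) : Prop :=
  forall t, 0 <= t -> filterlim f (within (fun s => 0 <= s) (locally t)) (locally (f t)).

Definition rho_fn (lE r0 rinf t : R) : R := (r0 - rinf) * exp (- lE * t) + rinf.

Definition alpha_fn (lE b c e0 t : R) : R :=
  b / c * (1 - exp (- c * t)) * exp (- lE * t) + e0 * exp (- lE * t).

From Stdlib Require Import Reals Lra.
From Coquelicot Require Import Coquelicot.
Open Scope R_scope.

(* Since alpha(0) = e(0), z(0) = 0, and the control law turns the
   sliding variable s = z + Lam * int_0^t z into a solution of s' = -K s + Delta
   with s(0) = 0, so |s| <= dE / K.  The integral Z = int_0^t z solves
   Z' = -Lam Z + s with Z(0) = 0, so |Z| <= dE / (Lam K), and |z| = |s - Lam Z|
   <= 2 dE / K <= dz.  Both bounds are one comparison argument: if y' = -k y + u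
   with |u| <= m and |y(0)| <= m / k, then exp(k t) (+-y(t) - m / k) is
   nonincreasing, hence stays <= 0.  Finally e = z + alpha, and the choice of c
   gives |alpha(t)| < exp(-lE t) (rho_0 - dz), whence |e| < rho. *)

Lemma deriv_nonneg_derivable_pt_lim (f f' : R -> R) x :
  deriv_nonneg f f' -> 0 < x -> derivable_pt_lim f x (f' x).
Proof.
  intros Hf Hx eps Heps.
  destruct (proj1 (filterlim_locally _ _) (Hf x (Rlt_le _ _ Hx)) (mkposreal eps Heps))
    as [d Hd].
  assert (Hm : 0 < Rmin d x) by (apply Rmin_glb_lt; [apply cond_pos | lra]).
  exists (mkposreal _ Hm); simpl; intros h Hh0 Hh.
  assert (Hhd : Rabs h < d) by (eapply Rlt_le_trans; [exact Hh | apply Rmin_l]).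
  assert (Hhx : Rabs h < x) by (eapply Rlt_le_trans; [exact Hh | apply Rmin_r]).
  apply Rabs_def2 in Hhx.
  replace h with (x + h - x) at 2 by ring.
  apply (Hd (x + h)).
  - change (Rabs (x + h - x) < d); replace (x + h - x) with h by ring; exact Hhd.
  - split; lra.
Qed.

Lemma deriv_nonneg_locally_lipschitz (f f' : R -> R) t :
  deriv_nonneg f f' -> 0 <= t ->
  exists d, 0 < d /\ forall y, 0 <= y -> Rabs (y - t) < d ->
    Rabs (f y - f t) <= (Rabs (f' t) + 1) * Rabs (y - t).
Proof.
  intros Hf Ht.
  destruct (proj1 (filterlim_locally _ _) (Hf t Ht) (mkposreal 1 Rlt_0_1)) as [d Hd].
  exists d; split; [apply cond_pos |]; intros y Hy Hyt.
  destruct (Req_dec y t) as [-> | Hne].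
  - rewrite !Rminus_diag, Rabs_R0; lra.
  - assert (Hq : Rabs ((f y - f t) / (y - t) - f' t) < 1)
      by (apply (Hd y); [exact Hyt | split; assumption]).
    replace (f y - f t) with ((f y - f t) / (y - t) * (y - t)) by (field; lra).
    rewrite Rabs_mult; apply Rmult_le_compat_r; [apply Rabs_pos |].
    pose proof (Rabs_triang_inv ((f y - f t) / (y - t)) (f' t)); lra.
Qed.

(* Continuity on [0, +oo), stated for the extension of f that is constant on
   (-oo, 0], so that the two-sided [continuity_pt] of the mean value theorem applies
   at 0. *)
Definition clamp_continuous (f : R -> R) : Prop :=
  forall x, continuity_pt (fun y => f (Rmax 0 y)) x.

Lemma Rmax0_lipschitz x y : Rabs (Rmax 0 y - Rmax 0 x) <= Rabs (y - x).
Proof.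
  unfold Rmax; destruct (Rle_dec 0 y), (Rle_dec 0 x);
    unfold Rabs; repeat destruct Rcase_abs; lra.
Qed.

Lemma continuity_pt_Rmax0 x : continuity_pt (fun y => Rmax 0 y) x.
Proof.
  apply continuity_pt_locally; intros eps; exists eps; intros y Hy.
  change (Rabs (y - x) < eps) in Hy.
  eapply Rle_lt_trans; [apply Rmax0_lipschitz | exact Hy].
Qed.

Lemma deriv_nonneg_clamp_continuous (f f' : R -> R) :
  deriv_nonneg f f' -> clamp_continuous f.
Proof.
  intros Hf x; apply continuity_pt_locally; intros eps.
  destruct (deriv_nonneg_locally_lipschitz f f' (Rmax 0 x) Hf (Rmax_l 0 x))
    as [d [Hd HL]].
  set (k := Rabs (f' (Rmax 0 x)) + 1).
  assert (Hk : 0 < k) by (pose proof (Rabs_pos (f' (Rmax 0 x))); unfold k; lra).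
  assert (Hm : 0 < Rmin d (eps / k))
    by (apply Rmin_glb_lt; [lra | apply Rdiv_lt_0_compat; [apply cond_pos | lra]]).
  exists (mkposreal _ Hm); intros y Hy; change (Rabs (y - x) < Rmin d (eps / k)) in Hy.
  pose proof (Rmax0_lipschitz x y) as Hyx.
  pose proof (Rmin_l d (eps / k)); pose proof (Rmin_r d (eps / k)).
  eapply Rle_lt_trans; [apply (HL _ (Rmax_l 0 y)); lra |].
  replace (pos eps) with (k * (eps / k)) by (field; lra).
  apply Rmult_lt_compat_l; lra.
Qed.

Lemma clamp_continuous_of_continuous (f : R -> R) :
  (forall x, continuity_pt f x) -> clamp_continuous f.
Proof.
  intros Hf x.
  apply (continuity_pt_comp (fun y => Rmax 0 y) f); [apply continuity_pt_Rmax0 | apply Hf].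
Qed.

Lemma clamp_continuous_const c : clamp_continuous (fun _ => c).
Proof. intros x; apply continuity_pt_const; intros ? ?; reflexivity. Qed.

Lemma clamp_continuous_exp k : clamp_continuous (fun t => exp (k * t)).
Proof.
  apply clamp_continuous_of_continuous; intros x.
  apply continuity_pt_filterlim, (ex_derive_continuous (fun u => exp (k * u))).
  auto_derive; auto.
Qed.

Lemma clamp_continuous_opp f : clamp_continuous f -> clamp_continuous (fun t => - f t).
Proof. intros Hf x; apply (continuity_pt_opp (fun y => f (Rmax 0 y))), Hf. Qed.

Lemma clamp_continuous_plus f g :
  clamp_continuous f -> clamp_continuous g -> clamp_continuous (fun t => f t + g t).
Proof.
  intros Hf Hg x; apply (continuity_pt_plus (fun y => f (Rmax 0 y)) (fun y => g (Rmax 0 y)));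
    auto.
Qed.

Lemma clamp_continuous_minus f g :
  clamp_continuous f -> clamp_continuous g -> clamp_continuous (fun t => f t - g t).
Proof.
  intros Hf Hg x; apply (continuity_pt_minus (fun y => f (Rmax 0 y)) (fun y => g (Rmax 0 y)));
    auto.
Qed.

Lemma clamp_continuous_mult f g :
  clamp_continuous f -> clamp_continuous g -> clamp_continuous (fun t => f t * g t).
Proof.
  intros Hf Hg x; apply (continuity_pt_mult (fun y => f (Rmax 0 y)) (fun y => g (Rmax 0 y)));
    auto.
Qed.

Lemma RInt_clamp (z : R -> R) t :
  0 <= t -> RInt z 0 t = RInt (fun y => z (Rmax 0 y)) 0 t.
Proof.
  intros Ht; apply RInt_ext; intros u Hu.
  rewrite Rmin_left in Hu by lra; rewrite Rmax_right by lra; reflexivity.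
Qed.

Lemma is_derive_RInt_clamp (z : R -> R) x :
  clamp_continuous z ->
  is_derive (fun t => RInt (fun y => z (Rmax 0 y)) 0 t) x (z (Rmax 0 x)).
Proof.
  intros Hz.
  assert (Hc : forall y, continuous (fun y => z (Rmax 0 y)) y)
    by (intros y; apply continuity_pt_filterlim, Hz).
  apply (is_derive_RInt (fun y => z (Rmax 0 y)) _ 0 x); [| apply Hc].
  apply filter_forall; intros u; apply (RInt_correct (V := R_CompleteNormedModule)).
  apply ex_RInt_continuous; intros; apply Hc.
Qed.

Lemma derivable_pt_lim_RInt0 (z : R -> R) x :
  clamp_continuous z -> 0 < x -> derivable_pt_lim (fun t => RInt z 0 t) x (z x).
Proof.
  intros Hz Hx; apply is_derive_Reals.
  replace (z x) with (z (Rmax 0 x)) by (rewrite Rmax_right by lra; reflexivity).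
  apply (is_derive_ext_loc (fun t => RInt (fun y => z (Rmax 0 y)) 0 t));
    [| apply is_derive_RInt_clamp, Hz].
  exists (mkposreal x Hx); intros y Hy.
  change (Rabs (y - x) < x) in Hy; apply Rabs_def2 in Hy.
  symmetry; apply RInt_clamp; lra.
Qed.

Lemma clamp_continuous_RInt0 (z : R -> R) :
  clamp_continuous z -> clamp_continuous (fun t => RInt z 0 t).
Proof.
  intros Hz x.
  apply continuity_pt_ext with
    (fun y => RInt (fun u => z (Rmax 0 u)) 0 (Rmax 0 y));
    [intros y; symmetry; apply RInt_clamp, Rmax_l |].
  apply (continuity_pt_comp (fun y => Rmax 0 y)
           (fun t => RInt (fun u => z (Rmax 0 u)) 0 t)); [apply continuity_pt_Rmax0 |].
  apply continuity_pt_filterlim,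
    (ex_derive_continuous (fun t => RInt (fun u => z (Rmax 0 u)) 0 t)).
  eexists; apply is_derive_RInt_clamp, Hz.
Qed.

Lemma derivable_pt_lim_exp_scal k x :
  derivable_pt_lim (fun t => exp (k * t)) x (k * exp (k * x)).
Proof. apply is_derive_Reals; auto_derive; [auto | ring]. Qed.

Lemma nonpos_derivative_le_initial (f f' : R -> R) t :
  0 <= t -> clamp_continuous f ->
  (forall x, 0 < x < t -> derivable_pt_lim f x (f' x)) ->
  (forall x, 0 < x < t -> f' x <= 0) -> f t <= f 0.
Proof.
  intros Ht Hc Hd Hneg.
  set (g := fun y => f (Rmax 0 y)).
  set (dg := fun x => if Rlt_dec 0 x then if Rlt_dec x t then f' x else 0 else 0).
  destruct (MVT_gen g 0 t dg) as [c [Hct E]].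
  - intros x Hx; rewrite Rmin_left in Hx by lra; rewrite Rmax_right in Hx by lra.
    unfold dg; destruct (Rlt_dec 0 x); [| lra]; destruct (Rlt_dec x t); [| lra].
    apply (is_derive_ext_loc f); [| apply is_derive_Reals, Hd; lra].
    exists (mkposreal x (proj1 Hx)); intros y Hy.
    change (Rabs (y - x) < x) in Hy; apply Rabs_def2 in Hy.
    unfold g; rewrite Rmax_right by lra; reflexivity.
  - intros x _; apply Hc.
  - unfold g in E; rewrite (Rmax_right 0 t), (Rmax_left 0 0) in E by lra.
    assert (dg c <= 0).
    { unfold dg; destruct (Rlt_dec 0 c); [| lra]; destruct (Rlt_dec c t); [| lra].
      apply Hneg; lra. }
    nra.
Qed.

Lemma le_of_linear_decay (y u : R -> R) (k m : R) :
  0 < k -> clamp_continuous y -> y 0 <= m / k ->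
  (forall x, 0 < x -> derivable_pt_lim y x (- k * y x + u x)) ->
  (forall x, 0 < x -> u x <= m) ->
  forall t, 0 <= t -> y t <= m / k.
Proof.
  intros Hk Hc H0 Hd Hu t Ht.
  assert (Hg : exp (k * t) * (y t - m / k) <= exp (k * 0) * (y 0 - m / k)).
  { apply (nonpos_derivative_le_initial (fun x => exp (k * x) * (y x - m / k))
             (fun x => exp (k * x) * (u x - m))); [exact Ht | | |].
    - apply clamp_continuous_mult; [apply clamp_continuous_exp |].
      apply clamp_continuous_minus; [exact Hc | apply clamp_continuous_const].
    - intros x Hx.
      replace (exp (k * x) * (u x - m)) with
        (k * exp (k * x) * (y x - m / k) + exp (k * x) * ((- k * y x + u x) - 0))
        by (field; lra).
      apply (derivable_pt_lim_mult (fun x => exp (k * x)) (fun x => y x - m / k));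
        [apply derivable_pt_lim_exp_scal |].
      apply (derivable_pt_lim_minus y (fun _ => m / k));
        [apply Hd; lra | apply derivable_pt_lim_const].
    - intros x Hx; pose proof (exp_pos (k * x)); specialize (Hu x ltac:(lra)); nra. }
  rewrite Rmult_0_r, exp_0 in Hg; pose proof (exp_pos (k * t)); nra.
Qed.

Lemma abs_le_of_linear_decay (y u : R -> R) (k m : R) :
  0 < k -> clamp_continuous y -> Rabs (y 0) <= m / k ->
  (forall x, 0 < x -> derivable_pt_lim y x (- k * y x + u x)) ->
  (forall x, 0 < x -> Rabs (u x) <= m) ->
  forall t, 0 <= t -> Rabs (y t) <= m / k.
Proof.
  intros Hk Hc H0 Hd Hu t Ht.
  pose proof (Rle_abs (y 0)); pose proof (Rle_abs (- y 0)); rewrite Rabs_Ropp in *.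
  assert (Hup : y t <= m / k).
  { apply (le_of_linear_decay y u k m); auto; try lra.
    intros x Hx; pose proof (Rle_abs (u x)); specialize (Hu x Hx); lra. }
  assert (Hlow : - y t <= m / k).
  { apply (le_of_linear_decay (fun x => - y x) (fun x => - u x) k m);
      auto using clamp_continuous_opp; try lra.
    - intros x Hx; replace (- k * - y x + - u x) with (- (- k * y x + u x)) by ring.
      apply (derivable_pt_lim_opp y), Hd, Hx.
    - intros x Hx; pose proof (Rle_abs (- u x)); rewrite Rabs_Ropp in *.
      specialize (Hu x Hx); lra. }
  apply Rabs_le; lra.
Qed.

Lemma integral_sliding_bound (z zd D : R -> R) (lam k d : R) :
  0 < lam -> 0 < k -> clamp_continuous z -> z 0 = 0 ->
  (forall x, 0 < x -> derivable_pt_lim z x (zd x)) ->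
  (forall x, 0 < x -> zd x = - lam * z x - k * (z x + lam * RInt z 0 x) + D x) ->
  (forall x, 0 < x -> Rabs (D x) <= d) ->
  forall t, 0 <= t -> Rabs (z t) <= 2 * d / k.
Proof.
  intros Hlam Hk Hc H0 Hd Hzd HD.
  assert (Hd0 : 0 <= d / k)
    by (apply Rdiv_le_0_compat; [pose proof (HD 1 Rlt_0_1); pose proof (Rabs_pos (D 1)); lra
                                 | exact Hk]).
  set (Z := fun t => RInt z 0 t).
  assert (HZ0 : Z 0 = 0) by (unfold Z; rewrite RInt_point; reflexivity).
  set (s := fun t => z t + lam * Z t).
  assert (Hs : forall t, 0 <= t -> Rabs (s t) <= d / k).
  { apply (abs_le_of_linear_decay s D k d Hk).
    - apply clamp_continuous_plus; [exact Hc |].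
      apply clamp_continuous_mult; [apply clamp_continuous_const | apply clamp_continuous_RInt0, Hc].
    - unfold s; rewrite H0, HZ0, Rmult_0_r, Rplus_0_r, Rabs_R0; exact Hd0.
    - intros x Hx.
      replace (- k * s x + D x) with (zd x + lam * z x) by (rewrite Hzd by exact Hx; unfold s, Z; ring).
      apply (derivable_pt_lim_plus z (fun t => lam * Z t)); [apply Hd, Hx |].
      apply (derivable_pt_lim_scal Z), derivable_pt_lim_RInt0; assumption.
    - exact HD. }
  assert (HZ : forall t, 0 <= t -> Rabs (Z t) <= (d / k) / lam).
  { apply (abs_le_of_linear_decay Z s lam (d / k) Hlam); [apply clamp_continuous_RInt0, Hc | | |].
    - rewrite HZ0, Rabs_R0; apply Rdiv_le_0_compat; lra.
    - intros x Hx; replace (- lam * Z x + s x) with (z x) by (unfold s; ring).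
      apply derivable_pt_lim_RInt0; assumption.
    - intros x Hx; apply Hs; lra. }
  intros t Ht; specialize (Hs t Ht); specialize (HZ t Ht).
  replace (z t) with (s t - lam * Z t) by (unfold s; ring).
  eapply Rle_trans; [apply Rabs_triang |].
  rewrite Rabs_Ropp, Rabs_mult, (Rabs_right lam) by lra.
  assert (lam * Rabs (Z t) <= d / k)
    by (replace (d / k) with (lam * (d / k / lam)) by (field; lra);
        apply Rmult_le_compat_l; lra).
  replace (2 * d / k) with (d / k + d / k) by (field; lra); lra.
Qed.

Lemma Rabs_le_norm3 (v : vec3) nu : Rabs (v nu) <= norm3 v.
Proof.
  unfold norm3; rewrite <- sqrt_Rsqr_abs; apply sqrt_le_1_alt.
  unfold Rsqr; simpl; destruct nu; nra.
Qed.

Lemma norm3_le_sum (v M : vec3) :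
  (forall nu, Rabs (v nu) <= M nu) -> norm3 v <= M AX + M AY + M AZ.
Proof.
  intros H; unfold norm3.
  pose proof (H AX); pose proof (H AY); pose proof (H AZ).
  pose proof (Rabs_pos (v AX)); pose proof (Rabs_pos (v AY)); pose proof (Rabs_pos (v AZ)).
  rewrite <- (sqrt_Rsqr (M AX + M AY + M AZ)) by lra.
  apply sqrt_le_1_alt; unfold Rsqr.
  rewrite <- !(pow2_abs (v _)); nra.
Qed.

Lemma lam_min_pos (d : vec3) : diag_pos d -> 0 < lam_min d.
Proof.
  intros H; pose proof (H AX); pose proof (H AY); pose proof (H AZ).
  unfold lam_min, Rmin; repeat destruct Rle_dec; lra.
Qed.

Lemma lam_min_le (d : vec3) nu : lam_min d <= d nu.
Proof. unfold lam_min, Rmin; repeat destruct Rle_dec; destruct nu; lra. Qed.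

Lemma le_lam_max (d : vec3) nu : d nu <= lam_max d.
Proof. unfold lam_max, Rmax; repeat destruct Rle_dec; destruct nu; lra. Qed.

Lemma twice_div_le_gain_bound (lmin lmax kmin k d : R) :
  0 < lmin <= lmax -> 0 < kmin <= k -> 0 <= d ->
  2 * d / k <= (lmin + lmax) * d / (lmin * kmin).
Proof.
  intros Hl Hk Hd.
  apply Rle_trans with (2 * d / kmin).
  - unfold Rdiv; apply Rmult_le_compat_l; [lra | apply Rinv_le_contravar; lra].
  - replace ((lmin + lmax) * d / (lmin * kmin))
      with (2 * d / kmin + (lmax - lmin) * d / (lmin * kmin)) by (field; lra).
    assert (0 <= (lmax - lmin) * d / (lmin * kmin))
      by (apply Rdiv_le_0_compat; [apply Rmult_le_pos | apply Rmult_lt_0_compat]; lra).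
    lra.
Qed.

Lemma twice_div_le_dz (Lam K : vec3) dE nu :
  diag_pos Lam -> diag_pos K -> 0 <= dE ->
  2 * dE / K nu <= (lam_min Lam + lam_max Lam) * dE / (lam_min Lam * lam_min K).
Proof.
  intros HLam HK HdE; apply twice_div_le_gain_bound; [| | exact HdE].
  - split; [apply lam_min_pos, HLam |].
    eapply Rle_trans; [apply (lam_min_le _ AX) | apply le_lam_max].
  - split; [apply lam_min_pos, HK | apply lam_min_le].
Qed.

Lemma exp_opp_mul_le1 l t : 0 <= l -> 0 <= t -> exp (- l * t) <= 1.
Proof.
  intros Hl Ht; rewrite <- exp_0.
  destruct (Req_dec (- l * t) 0) as [-> | Hne]; [lra |].
  left; apply exp_increasing; nra.
Qed.

Lemma alpha_fn_0 lE b c e0 : alpha_fn lE b c e0 0 = e0.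
Proof. unfold alpha_fn; rewrite !Rmult_0_r, exp_0; ring. Qed.

Lemma abs_alpha_fn_le lE b c e0 t :
  0 < c -> 0 <= t ->
  Rabs (alpha_fn lE b c e0 t) <= exp (- lE * t) * (Rabs b / c + Rabs e0).
Proof.
  intros Hc Ht; unfold alpha_fn.
  pose proof (exp_pos (- lE * t)) as HE; pose proof (exp_pos (- c * t)).
  pose proof (exp_opp_mul_le1 c t ltac:(lra) Ht).
  replace (b / c * (1 - exp (- c * t)) * exp (- lE * t) + e0 * exp (- lE * t))
    with (exp (- lE * t) * (b / c * (1 - exp (- c * t)) + e0)) by ring.
  rewrite Rabs_mult, (Rabs_right (exp _)) by lra.
  apply Rmult_le_compat_l; [lra |].
  eapply Rle_trans; [apply Rabs_triang |].
  rewrite Rabs_mult, (Rabs_right (1 - _)) by lra.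
  unfold Rdiv; rewrite Rabs_mult, (Rabs_right (/ c)) by (left; apply Rinv_0_lt_compat, Hc).
  assert (0 <= Rabs b * / c) by (apply Rdiv_le_0_compat; [apply Rabs_pos | exact Hc]).
  nra.
Qed.

Lemma abs_lt_rho_fn (lE r0 rinf b c e0 dz e t : R) :
  0 < lE -> 0 < c -> 0 <= t -> dz < rinf -> dz < r0 - Rabs e0 ->
  c > Rabs b / (r0 - dz - Rabs e0) ->
  Rabs (e - alpha_fn lE b c e0 t) <= dz ->
  Rabs e < rho_fn lE r0 rinf t.
Proof.
  intros HlE Hc Ht Hrinf Hr0 Hcb Hz.
  assert (Hb : Rabs b / c < r0 - dz - Rabs e0).
  { apply (Rmult_lt_reg_r c); [exact Hc |].
    apply (Rmult_lt_reg_r (/ (r0 - dz - Rabs e0))); [apply Rinv_0_lt_compat; lra |].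
    replace (Rabs b / c * c * / (r0 - dz - Rabs e0)) with (Rabs b / (r0 - dz - Rabs e0))
      by (field; lra).
    replace ((r0 - dz - Rabs e0) * c * / (r0 - dz - Rabs e0)) with c by (field; lra).
    lra. }
  pose proof (abs_alpha_fn_le lE b c e0 t Hc Ht).
  pose proof (exp_pos (- lE * t)); pose proof (exp_opp_mul_le1 lE t ltac:(lra) Ht).
  replace e with ((e - alpha_fn lE b c e0 t) + alpha_fn lE b c e0 t) by ring.
  eapply Rle_lt_trans; [apply Rabs_triang |].
  unfold rho_fn; nra.
Qed.

Lemma rho_fn_le_Rmax lE r0 rinf t :
  0 <= lE -> 0 <= t -> rho_fn lE r0 rinf t <= Rmax r0 rinf.
Proof.
  intros HlE Ht; unfold rho_fn.
  pose proof (exp_pos (- lE * t)); pose proof (exp_opp_mul_le1 lE t HlE Ht).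
  pose proof (Rmax_l r0 rinf); pose proof (Rmax_r r0 rinf); nra.
Qed.

Theorem theorem1
  (pO vO pE vE vEd Delta : axis -> R -> R) (dE : R)
  (Lam K : vec3) (lE : R) (r0 rinf c : vec3) (alphad : axis -> R -> R) :
  (* target trajectory: continuously differentiable on [0,oo) *)
  (forall nu, deriv_nonneg (pO nu) (vO nu)) ->
  (forall nu, cont_nonneg (vO nu)) ->
  (* end-effector trajectory, differentiable on [0,oo) *)
  (forall nu, deriv_nonneg (pE nu) (vE nu)) ->
  (* dynamics  pE' = pEd' + Delta  with bounded Delta *)
  (forall nu t, 0 <= t -> vE nu t = vEd nu t + Delta nu t) ->
  0 < dE ->
  (forall t, 0 <= t -> norm3 (fun nu => Delta nu t) <= dE) ->
  (* gains *)
  diag_pos Lam -> diag_pos K ->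
  let eE := fun nu t => pE nu t - pO nu t in
  let deE0 := fun nu => vE nu 0 - vO nu 0 in
  let dz := (lam_min Lam + lam_max Lam) * dE / (lam_min Lam * lam_min K) in
  0 < lE ->
  (forall nu, 0 < rinf nu) ->
  (forall nu, Rabs (eE nu 0) < r0 nu) ->
  (forall nu, dz < Rmin (rinf nu) (r0 nu - Rabs (eE nu 0))) ->
  let b := fun nu => lE * eE nu 0 + deE0 nu in
  (forall nu, 0 < c nu) ->
  (forall nu, c nu > Rabs (b nu) / (r0 nu - dz - Rabs (eE nu 0))) ->
  let alpha := fun nu t => alpha_fn lE (b nu) (c nu) (eE nu 0) t in
  (forall nu, deriv_nonneg (alpha nu) (alphad nu)) ->
  let z := fun nu t => eE nu t - alpha nu t in
  let s := fun nu t => z nu t + Lam nu * RInt (fun tau => z nu tau) 0 t in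
  (* control law *)
  (forall nu t, 0 <= t ->
     vEd nu t = vO nu t + alphad nu t - Lam nu * z nu t - K nu * s nu t) ->
  (exists M, forall t, 0 <= t -> norm3 (fun nu => eE nu t) <= M) /\
  (forall nu t, 0 <= t -> Rabs (eE nu t) < rho_fn lE (r0 nu) (rinf nu) t).
Proof.
  intros HpO _ HpE Hdyn HdE HDel HLam HK eE deE0 dz HlE Hrinf Hr0 Hdz b Hc Hcb alpha Hal
    z s Hctrl.
  assert (Hz : forall nu t, 0 <= t -> Rabs (z nu t) <= dz).
  { intros nu t Ht; eapply Rle_trans.
    - apply (integral_sliding_bound (z nu) (fun x => vE nu x - vO nu x - alphad nu x)
               (Delta nu) (Lam nu) (K nu) dE); [apply HLam | apply HK | | | | | | exact Ht].
      + apply clamp_continuous_minus; [apply clamp_continuous_minus |];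
          eapply deriv_nonneg_clamp_continuous; auto.
      + unfold z, alpha; rewrite alpha_fn_0; unfold eE; ring.
      + intros x Hx; apply derivable_pt_lim_minus; [apply derivable_pt_lim_minus |];
          apply deriv_nonneg_derivable_pt_lim; auto.
      + intros x Hx; rewrite Hdyn, Hctrl by lra; unfold s.
        change (fun tau => z nu tau) with (z nu); ring.
      + intros x Hx; eapply Rle_trans; [apply (Rabs_le_norm3 (fun nu => Delta nu x)) |].
        apply HDel; lra.
    - apply twice_div_le_dz; [exact HLam | exact HK | lra]. }
  assert (He : forall nu t, 0 <= t -> Rabs (eE nu t) < rho_fn lE (r0 nu) (rinf nu) t).
  { intros nu t Ht; specialize (Hdz nu).
    apply (abs_lt_rho_fn lE (r0 nu) (rinf nu) (b nu) (c nu) (eE nu 0) dz); auto.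
    - eapply Rlt_le_trans; [exact Hdz | apply Rmin_l].
    - eapply Rlt_le_trans; [exact Hdz | apply Rmin_r].
    - apply (Hz nu t Ht). }
  split; [| exact He].
  exists (Rmax (r0 AX) (rinf AX) + Rmax (r0 AY) (rinf AY) + Rmax (r0 AZ) (rinf AZ)).
  intros t Ht; apply (norm3_le_sum (fun nu => eE nu t) (fun nu => Rmax (r0 nu) (rinf nu))).
  intros nu; left; eapply Rlt_le_trans; [apply He, Ht | apply rho_fn_le_Rmax; lra].
Qed.
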